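(* Fix $0<b<1$. For $\lambda>0$ let $s_\lambda$ be a minimizer of $$J_\lambda[s]=2\pi\int_b^1\Big(s'^2+\frac{4s^2}{r^2}+\frac{\lambda}{4}(2s^2-1)^2\Big)r\,dr$$ over $s\in H^1(b,1)$ with $s(b)=s(1)=\frac1{\sqrt2}$. Then $s_\lambda\to\frac1{\sqrt2}$ uniformly on $[b,1]$ as $\lambda\to\infty$.
   Context: Here $\lambda=|A|/L$, where $A<0$ is the (rescaled) temperature parameter and $L>0$ the elastic constant of the Landau–de Gennes model; $s_\lambda$ is the scalar order parameter of the defect-free state $Q^*=s_\lambda(r)(\mathbf n\otimes\mathbf n-\mathbf m\otimes\mathbf m)$ on the annulus $b\le r\le1$, and it is a nonnegative classical solution of $s''+s'/r-4s/r^2=\lambda s(2s^2-1)$. *)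

From HB Require Import structures.
From mathcomp Require Import all_boot all_order all_algebra.
From mathcomp Require Import all_classical all_reals all_analysis.
Set Implicit Arguments. Unset Strict Implicit. Unset Printing Implicit Defensive.
Import Order.TTheory GRing.Theory Num.Theory.
Import numFieldNormedType.Exports.
Local Open Scope classical_set_scope.
Local Open Scope ring_scope.

Section Defs.
Variable R : realType.
Local Notation mu := (@lebesgue_measure R).

(* s belongs to H^1(b,1) with weak derivative g: g is square-integrable on
   [b,1] (hence integrable, the interval being bounded) and
   s(x) = s(b) + int_b^x g for every x in [b,1] (absolute continuity). *)
Definition H1_with_deriv (b : R) (s g : R -> R) : Prop :=
  measurable_fun `[b, 1] g /\
  mu.-integrable `[b, 1] (fun x => ((g x) ^+ 2)%:E) /\
  forall x, b <= x <= 1 ->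
    ((s x)%:E = (s b)%:E + \int[mu]_(t in `[b, x]%classic) (g t)%:E)%E.

Definition J_energy (b lam : R) (s g : R -> R) : \bar R :=
  ((2 * pi)%:E *
   \int[mu]_(r in `[b, 1%R])
      ((((g r) ^+ 2 + 4 * (s r) ^+ 2 / r ^+ 2
         + lam / 4 * (2 * (s r) ^+ 2 - 1) ^+ 2) * r)%:E))%E.

Definition bdry_val : R := (Num.sqrt 2)^-1.

Definition is_minimizer (b lam : R) (s : R -> R) : Prop :=
  exists g, H1_with_deriv b s g /\ s b = bdry_val /\ s 1 = bdry_val /\
    forall t h, H1_with_deriv b t h -> t b = bdry_val -> t 1 = bdry_val ->
      (J_energy b lam s g <= J_energy b lam t h)%E.

End Defs.

(* Comparing with the constant competitor 1/sqrt 2 bounds the energy of every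
   minimizer s_lam by 2 pi (2/b)(1 - b), uniformly in lam.  Hence \int s'^2 is
   bounded, which yields a modulus of continuity for s_lam independent of lam,
   while \int lam (2 s^2 - 1)^2 r dr stays bounded.  If |s_lam(x) - 1/sqrt 2|
   >= e somewhere, continuity and s_lam(b) = 1/sqrt 2 give a point y where the
   deviation is exactly e (e <= 1/4), and on an interval of fixed length around
   y the potential (2 s^2 - 1)^2 stays above e^2/4; its contribution, of order
   lam, then violates the energy bound once lam is large. *)

From mathcomp Require Import all_boot all_order all_algebra.
From mathcomp Require Import all_classical all_reals all_analysis.
From mathcomp Require Import ring lra.
From mathcomp Require Import measurable_realfun.
Set Implicit Arguments.
Unset Strict Implicit.
Unset Printing Implicit Defensive.
Import Order.TTheory GRing.Theory Num.Theory.
Import numFieldNormedType.Exports.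
Local Open Scope classical_set_scope.
Local Open Scope ring_scope.

Section ge0_le_integral_nonmeasurable.
Local Open Scope ereal_scope.
Context d (T : measurableType d) (R : realType).
Variable mu : {measure set T -> \bar R}.

(* No measurability is needed: the integral of a nonnegative function is a
   supremum over the simple functions below it. *)
Lemma ge0_le_integralT (f1 f2 : T -> \bar R) :
  (forall x, 0 <= f1 x) -> (forall x, f1 x <= f2 x) ->
  \int[mu]_x f1 x <= \int[mu]_x f2 x.
Proof.
move=> f10 f12.
have f20 x : 0 <= f2 x by exact: le_trans (f10 x) (f12 x).
rewrite !ge0_integralTE//.
apply: ereal_sup_le => _ [h /= hf <-]; exists h => //= x.
exact: le_trans (hf x) (f12 x).
Qed.

Lemma ge0_le_subset_integral (A B : set T) (f1 f2 : T -> \bar R) :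
  A `<=` B -> (forall x, A x -> 0 <= f1 x) -> (forall x, B x -> 0 <= f2 x) ->
  (forall x, A x -> f1 x <= f2 x) ->
  \int[mu]_(x in A) f1 x <= \int[mu]_(x in B) f2 x.
Proof.
move=> AB f10 f20 f12; rewrite (integral_mkcond A) (integral_mkcond B).
apply: ge0_le_integralT => x; rewrite /patch.
- by case: ifP => // /set_mem /f10.
- case: ifP => [/set_mem Ax|_]; first by rewrite ifT ?inE; [exact: f12|exact: AB].
  by case: ifP => // /set_mem /f20.
Qed.

End ge0_le_integral_nonmeasurable.

Lemma EFin_addlE {R : realType} {a c : R} {I : \bar R} :
  c%:E = (a%:E + I)%E -> I = (c - a)%:E.
Proof. by case: I => [r||] //= [->]; congr EFin; rewrite addrAC subrr add0r. Qed.

Lemma within_continuous_modulus (R : realType) (f : R -> R) (A : set R) :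
  (forall e, 0 < e -> exists2 d, 0 < d &
    forall x y, A x -> A y -> `|x - y| < d -> `|f x - f y| < e) ->
  {within A, continuous f}.
Proof.
move=> fA; apply/subspace_continuousP => x Ax.
apply/cvgrPdist_lt => e e0.
have [d d0 fd] := fA e e0.
rewrite near_withinE; near=> y => Ay.
exact: fd.
Unshelve. all: by end_near. Qed.

Lemma IVT_dist (R : realType) (f : R -> R) (a x c e : R) : a <= x ->
  {within `[a, x], continuous f} -> f a = c -> 0 < e -> e <= `|f x - c| ->
  exists2 y, y \in `[a, x] & `|f y - c| = e.
Proof.
move=> ax fC fa e0 ex.
have [cx|xc] := leP c (f x).
- rewrite ger0_norm ?subr_ge0 // in ex.
  have [|y yI fy] := IVT ax fC (v := c + e).
    by rewrite fa ge_min le_max; apply/andP; split; apply/orP; [left|right]; lra.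
  by exists y => //; rewrite fy addrAC subrr add0r ger0_norm // ltW.
- rewrite ltr0_norm ?subr_lt0 // in ex.
  have [|y yI fy] := IVT ax fC (v := c - e).
    by rewrite fa ge_min le_max; apply/andP; split; apply/orP; [right|left]; lra.
  by exists y => //; rewrite fy addrAC subrr add0r normrN ger0_norm // ltW.
Qed.

Lemma normr_le_AMGM (R : realFieldType) (a r : R) : 0 < a ->
  `|r| <= (2 * a)^-1 * r ^+ 2 + a / 2.
Proof.
move=> a0; rewrite -(real_normK (num_real r)) -subr_ge0.
have -> : (2 * a)^-1 * `|r| ^+ 2 + a / 2 - `|r| = (`|r| - a) ^+ 2 / (2 * a).
  by field; rewrite gt_eqF.
by rewrite divr_ge0 ?sqr_ge0 // mulr_ge0 // ltW.
Qed.

Section H1_estimates.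
Variable R : realType.
Local Notation mu := (@lebesgue_measure R).
Variables (b : R) (s g : R -> R).
Hypothesis sg : H1_with_deriv b s g.

Lemma H1_increment x y : b <= y -> y <= x -> x <= 1 ->
  (\int[mu]_(t in `]y, x]) (g t)%:E)%E = (s x - s y)%:E.
Proof.
case: sg => mg [_ hs] hby yx x1.
have bx : b <= x by exact: le_trans yx.
have sx := hs x; have sy := hs y.
rewrite bx x1 hby (le_trans yx x1) /= in sx sy.
have Eu : `[b, x]%classic = `[b, y]%classic `|` `]y, x]%classic :> set R.
  by rewrite -itv_bndbnd_setU //= bnd_simp.
move: (sx erefl); rewrite Eu integral_setU //; last 2 first.
- rewrite -Eu; apply/measurable_EFinP; apply: measurable_funS mg => //.
  by move=> z /=; rewrite !in_itv /= => /andP[-> zx]; rewrite (le_trans zx x1).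
- rewrite disj_set2E; apply/eqP/seteqP; split => z //=; rewrite !in_itv /=.
  by move=> [/andP[_ zy] /andP[yz _]]; move: (lt_le_trans yz zy); rewrite ltxx.
rewrite (EFin_addlE (sy erefl)) addeA -EFinD (addrC (s b)) subrK.
exact: EFin_addlE.
Qed.

Variable K : R.
Hypothesis gK : (\int[mu]_(t in `[b, 1%R]) ((g t) ^+ 2)%:E <= K%:E)%E.

Lemma H1_increment_le a x y : 0 < a -> b <= y -> y <= x -> x <= 1 ->
  `|s x - s y| <= K / (2 * a) + a * (x - y) / 2.
Proof.
move=> a0 hby yx x1.
have yx1 : `]y, x] `<=` `[b, 1].
  move=> z /=; rewrite !in_itv /= => /andP[yz zx].
  by rewrite (le_trans hby (ltW yz)) (le_trans zx x1).
have mI : measurable (`]y, x]%classic : set R) by [].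
have mg : measurable_fun `]y, x] g.
  by case: sg => mg _; exact: measurable_funS mg.
have mg2 : measurable_fun `]y, x] (fun t => g t ^+ 2) by exact: measurable_funX.
have ha2 : 0 <= (2 * a)^-1 by rewrite invr_ge0 mulr_ge0 // ltW.
have int_abs := le_abse_integral mu mI (proj2 (measurable_EFinP _ _) mg).
rewrite H1_increment //= in int_abs.
have int_AMGM : (\int[mu]_(t in `]y, x]) (`|g t|)%:E <=
    \int[mu]_(t in `]y, x]) (((2 * a)^-1)%:E * (g t ^+ 2)%:E + (a / 2)%:E))%E.
  apply: ge0_le_subset_integral => //; move=> t _; rewrite -EFinM -EFinD lee_fin.
  - by rewrite addr_ge0 ?(mulr_ge0 ha2 (sqr_ge0 _)) // divr_ge0 // ltW.
  - exact: normr_le_AMGM.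
rewrite ge0_integralD // in int_AMGM; last 3 first.
- by move=> t _; rewrite -EFinM lee_fin mulr_ge0 // sqr_ge0.
- by apply/measurable_EFinP; apply: measurable_funM.
- by move=> t _; rewrite lee_fin divr_ge0 // ltW.
rewrite ge0_integralZl // ?integral_cst // in int_AMGM; last 2 first.
- exact/measurable_EFinP.
- by move=> t _; rewrite lee_fin sqr_ge0.
have g2K : (\int[mu]_(t in `]y, x]) (g t ^+ 2)%:E <= K%:E)%E.
  apply: le_trans gK.
  by apply: ge0_le_subset_integral => // t _; rewrite lee_fin ?sqr_ge0.
have muyx : (mu `]y, x] <= (x - y)%:E)%E.
  rewrite lebesgue_measure_itv //=; case: ifP => _; first by rewrite -EFinD.
  by rewrite lee_fin subr_ge0.
rewrite -lee_fin; apply: le_trans int_abs _; apply: le_trans int_AMGM _.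
rewrite EFinD; apply: leeD.
- by rewrite (mulrC K) EFinM; apply: lee_wpmul2l; rewrite ?lee_fin.
- rewrite [a * _ / 2]mulrAC [(a / 2 * _)%:E]EFinM; apply: lee_wpmul2l => //.
  by rewrite lee_fin divr_ge0 // ltW.
Qed.

Lemma H1_modulus e x y : 0 < K -> 0 < e -> b <= x <= 1 -> b <= y <= 1 ->
  `|x - y| < e ^+ 2 / K -> `|s x - s y| < e.
Proof.
move=> K0 e0.
wlog yx : x y / y <= x.
  move=> W xI yI; have [yx|xy] := leP y x; first exact: W.
  by rewrite distrC (distrC (s x)); apply: W => //; exact: ltW.
move=> /andP[_ x1] /andP[hby _].
rewrite ger0_norm ?subr_ge0 // => xye.
have Ke0 : 0 < K / e by rewrite divr_gt0.
apply: le_lt_trans (H1_increment_le Ke0 hby yx x1) _.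
have -> : K / (2 * (K / e)) = e / 2 by field; rewrite ?gt_eqF.
have : K / e * (x - y) < e.
  have {2}<- : K / e * (e ^+ 2 / K) = e by field; rewrite ?gt_eqF.
  by rewrite ltr_pM2l.
lra.
Qed.

End H1_estimates.

Section potential.
Variable R : realType.
Local Notation c := (bdry_val R).

Lemma bdry_val_sqr : c ^+ 2 = 2^-1.
Proof. by rewrite /bdry_val exprVn sqr_sqrtr. Qed.

Lemma bdry_val_ge0 : 0 <= c.
Proof. by rewrite /bdry_val invr_ge0 sqrtr_ge0. Qed.

(* Factor [2 z^2 - 1 = 2 (z - c) (z + c)]: the first factor is at least [e/2]
   and, [z] being close to [c], the second at least [1/2]. *)
Lemma sqr_2sqr_sub1_ge (e y z : R) : 0 < e -> e <= 4^-1 ->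
  `|y - c| = e -> `|z - y| < e / 2 -> e ^+ 2 / 4 <= (2 * z ^+ 2 - 1) ^+ 2.
Proof.
move=> e0 e4 yc zy.
have c2 := bdry_val_sqr; have c0 := bdry_val_ge0.
have c_ge : 2^-1 <= c by nra.
have zc : e / 2 < `|z - c|.
  by have := ler_distD z y c; rewrite yc (distrC y z); lra.
have zc2 : (e / 2) ^+ 2 <= (z - c) ^+ 2.
  by rewrite -(real_normK (num_real (z - c))); nra.
have zc_ge : 2^-1 <= z + c.
  have : `|y - c| <= e by rewrite yc.
  move/ltr_normlP: zy => [? ?] /ler_normlP [? ?]; lra.
have -> : (2 * z ^+ 2 - 1) ^+ 2 = 4 * ((z - c) ^+ 2 * (z + c) ^+ 2).
  have -> : 2 * z ^+ 2 - 1 = 2 * (z - c) * (z + c) + (2 * c ^+ 2 - 1) by ring.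
  by rewrite c2 mulfV // subrr addr0; ring.
have : (e / 2) ^+ 2 * 4^-1 <= (z - c) ^+ 2 * (z + c) ^+ 2.
  by apply: ler_pM => //; nra.
lra.
Qed.

End potential.

Section minimizer.
Variable R : realType.
Local Notation mu := (@lebesgue_measure R).
Local Notation c := (bdry_val R).
Variable b : R.
Hypotheses (b0 : 0 < b) (b1 : b < 1).

(* Bounds [2 ln (1/b) = 2 \int_b^1 dr/r], the energy of the constant competitor
   [1/sqrt 2] divided by [2 pi]. *)
Definition energy_bound : R := 2 / b * (1 - b).

Lemma energy_bound_gt0 : 0 < energy_bound.
Proof. by rewrite mulr_gt0 ?divr_gt0 // subr_gt0. Qed.

Local Notation density lam s g :=
  (fun r => (g r ^+ 2 + 4 * s r ^+ 2 / r ^+ 2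
              + lam / 4 * (2 * s r ^+ 2 - 1) ^+ 2) * r).

Lemma elastic_term_ge0 (x r : R) : 0 <= 4 * x ^+ 2 / r ^+ 2.
Proof. by rewrite divr_ge0 ?sqr_ge0 // mulr_ge0 ?sqr_ge0. Qed.

Lemma bulk_term_ge0 (lam x : R) :
  0 <= lam -> 0 <= lam / 4 * (2 * x ^+ 2 - 1) ^+ 2.
Proof. by move=> lam0; rewrite mulr_ge0 ?sqr_ge0 ?divr_ge0. Qed.

Lemma density_ge0 (lam : R) (s g : R -> R) (r : R) :
  0 <= lam -> b <= r -> 0 <= density lam s g r.
Proof.
move=> lam0 br; apply: mulr_ge0; last exact: le_trans (ltW b0) br.
by rewrite !addr_ge0 ?sqr_ge0 ?elastic_term_ge0 ?bulk_term_ge0.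
Qed.

Lemma H1_bdry_val : H1_with_deriv b (fun=> c) (fun=> 0).
Proof.
split; first exact: measurable_cst.
split; last by move=> x _; rewrite integral0 adde0.
by rewrite expr0n; exact: integrable0.
Qed.

Lemma J_energy_bdry_val_le (lam : R) : 0 <= lam ->
  (J_energy b lam (fun=> c) (fun=> 0%R) <= (2 * pi)%:E * energy_bound%:E)%E.
Proof.
move=> lam0; rewrite /J_energy; apply: lee_wpmul2l.
  by rewrite lee_fin mulr_ge0 // pi_ge0.
have mI : measurable (`[b, 1%R]%classic : set R) by [].
have -> : energy_bound%:E = (\int[mu]_(t in `[b, 1%R]) (2 / b)%:E)%E.
  have mu_bI : mu `[b, 1%R] = (1 - b)%:E.
    by rewrite lebesgue_measure_itv /= ifT ?lte_fin // -EFinD.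
  rewrite (integral_cst mu mI) /energy_bound EFinM.
  by congr (_ * _)%E; exact/esym/mu_bI.
apply: ge0_le_subset_integral => // t /=; rewrite in_itv /= => /andP[bt _].
- by rewrite lee_fin; exact: (density_ge0 (fun=> c) (fun=> 0)).
- by rewrite lee_fin divr_ge0 // ltW.
have t0 : 0 < t by exact: lt_le_trans bt.
rewrite lee_fin bdry_val_sqr.
have -> : (0 ^+ 2 + 4 * 2^-1 / t ^+ 2 + lam / 4 * (2 * 2^-1 - 1) ^+ 2) * t = 2 / t.
  by field; rewrite gt_eqF.
by rewrite ler_wpM2l // lef_pV2 // posrE.
Qed.

Lemma minimizer_energy_le (lam : R) (s : R -> R) : 0 <= lam -> is_minimizer b lam s ->
  exists g, [/\ H1_with_deriv b s g, s b = c &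
    (\int[mu]_(t in `[b, 1%R]) (density lam s g t)%:E <= energy_bound%:E)%E].
Proof.
move=> lam0 [g [sg [sb [_ smin]]]]; exists g; split => //.
have := le_trans (smin _ _ H1_bdry_val erefl erefl) (J_energy_bdry_val_le lam0).
by rewrite /J_energy lee_pmul2l // lte_fin mulr_gt0 ?pi_gt0.
Qed.

Section energy_consequences.
Variables (lam M : R) (s g : R -> R).
Hypotheses (lam0 : 0 <= lam) (mg : measurable_fun `[b, 1] g)
  (energy_le : (\int[mu]_(t in `[b, 1%R]) (density lam s g t)%:E <= M%:E)%E).

Lemma deriv_sqr_integral_le :
  (\int[mu]_(t in `[b, 1%R]) ((g t) ^+ 2)%:E <= (M / b)%:E)%E.
Proof.
have bI : (b%:E * \int[mu]_(t in `[b, 1%R]) ((g t) ^+ 2)%:E <= M%:E)%E.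
  rewrite -ge0_integralZl //; last 3 first.
  - exact/measurable_EFinP/measurable_funX.
  - by move=> t _; rewrite lee_fin sqr_ge0.
  - by rewrite lee_fin ltW.
  apply: le_trans energy_le; apply: ge0_le_subset_integral => //;
    move=> t /=; rewrite in_itv /= => /andP[bt _]; rewrite -?EFinM lee_fin.
  - by rewrite mulr_ge0 ?sqr_ge0 // ltW.
  - exact: density_ge0.
  have t0 : 0 <= t by exact: le_trans (ltW b0) bt.
  rewrite mulrC (le_trans (ler_wpM2l (sqr_ge0 _) bt)) // ler_wpM2r //.
  by rewrite -addrA lerDl addr_ge0 ?elastic_term_ge0 ?bulk_term_ge0.
set X := (\int[mu]_(t in _) _)%E in bI *.
have -> : X = ((b^-1)%:E * (b%:E * X))%E.
  by rewrite muleA -EFinM mulVf ?gt_eqF // mul1e.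
rewrite mulrC EFinM; apply: lee_wpmul2l => //.
by rewrite lee_fin invr_ge0 ltW.
Qed.

Lemma potential_integral_le :
  (\int[mu]_(t in `[b, 1%R]) ((lam / 4 * (2 * s t ^+ 2 - 1) ^+ 2) * t)%:E <= M%:E)%E.
Proof.
apply: le_trans energy_le; apply: ge0_le_subset_integral => //;
  move=> t /=; rewrite in_itv /= => /andP[bt _]; rewrite lee_fin.
- have t0 : 0 <= t by exact: le_trans (ltW b0) bt.
  by rewrite mulr_ge0 ?bulk_term_ge0.
- exact: density_ge0.
have t0 : 0 <= t by exact: le_trans (ltW b0) bt.
by rewrite ler_wpM2r // lerDr addr_ge0 ?sqr_ge0 ?elastic_term_ge0.
Qed.

End energy_consequences.

Lemma exists_window (y w : R) : b <= y <= 1 -> 0 <= w <= (1 - b) / 2 ->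
  exists u, [/\ b <= u, u + w <= 1 & u <= y <= u + w].
Proof.
move=> /andP[hby y1] /andP[w0 wb]; have [yw1|yw1] := leP (y + w) 1.
  by exists y; split => //; apply/andP; split; lra.
by exists (y - w); split; try apply/andP; try split; lra.
Qed.

Lemma potential_integral_ge (lam q u w : R) (s : R -> R) :
  0 <= lam -> 0 <= q -> 0 < w -> b <= u -> u + w <= 1 ->
  (forall z, u <= z <= u + w -> q <= (2 * s z ^+ 2 - 1) ^+ 2) ->
  ((lam / 4 * q * b * w)%:E <=
    \int[mu]_(t in `[b, 1%R]) ((lam / 4 * (2 * s t ^+ 2 - 1) ^+ 2) * t)%:E)%E.
Proof.
move=> lam0 q0 w0 bu uw1 sq.
have mI : measurable (`[u, u + w]%classic : set R) by [].
have mu_uw : mu `[u, u + w] = w%:E.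
  by rewrite lebesgue_measure_itv /= ifT ?lte_fin ?ltrDl // -EFinD addrAC subrr add0r.
have -> : ((lam / 4 * q * b * w)%:E =
    \int[mu]_(t in `[u, (u + w)%R]) (lam / 4 * q * b)%:E)%E.
  by rewrite (integral_cst mu mI) EFinM; congr (_ * _)%E; exact/esym/mu_uw.
apply: ge0_le_subset_integral; move=> z /=; rewrite ?in_itv /= => /andP[hz1 hz2].
- by apply/andP; split; lra.
- by rewrite lee_fin !mulr_ge0 ?divr_ge0 // ltW.
- by rewrite lee_fin mulr_ge0 ?bulk_term_ge0 // (le_trans (ltW b0) hz1).
have bz : b <= z by lra.
rewrite lee_fin ler_pM ?mulr_ge0 ?divr_ge0 ?(ltW b0) //.
by rewrite ler_wpM2l ?divr_ge0 // sq // hz1.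
Qed.

(* On an interval of this length the bound [\int g^2 <= energy_bound / b]
   keeps [s] within [e / 2] of its value at any point of the interval. *)
Definition window (e : R) : R :=
  Num.min ((e / 2) ^+ 2 / (energy_bound / b) / 2) ((1 - b) / 2).

Lemma window_spec (e : R) : 0 < e -> [/\ 0 < window e,
  window e < (e / 2) ^+ 2 / (energy_bound / b) & window e <= (1 - b) / 2].
Proof.
move=> e0; have eK : 0 < (e / 2) ^+ 2 / (energy_bound / b).
  by apply: divr_gt0; [rewrite exprn_gt0 ?divr_gt0 | exact: divr_gt0 energy_bound_gt0 b0].
split; last by rewrite ge_min lexx orbT.
- by rewrite lt_min (divr_gt0 eK) // divr_gt0 // subr_gt0.
- by rewrite gt_min ltr_pdivrMr // ltr_pMr // ltr1n.
Qed.

Lemma minimizer_deviation_le (lam e x : R) (s : R -> R) :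
  0 < lam -> is_minimizer b lam s -> 0 < e -> e <= 4^-1 ->
  b <= x <= 1 -> e <= `|s x - c| ->
  lam * (e ^+ 2 * b * window e) <= 16 * energy_bound.
Proof.
move=> lam0 smin e0 e4 /andP[bx x1] dev.
have [g [sg sb energy_le]] := minimizer_energy_le (ltW lam0) smin.
have gK := deriv_sqr_integral_le (ltW lam0) (proj1 sg) energy_le.
have K0 : 0 < energy_bound / b by rewrite divr_gt0 ?energy_bound_gt0.
have s_mod := H1_modulus sg gK.
have s_cont : {within `[b, x], continuous s}.
  apply: within_continuous_modulus => e' e'0.
  exists (e' ^+ 2 / (energy_bound / b)); first by rewrite divr_gt0 // exprn_gt0.
  move=> z w /=; rewrite !in_itv /= => /andP[bz zx] /andP[bw wx].
  by apply: s_mod; rewrite // ?bz ?bw (le_trans zx x1, le_trans wx x1).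
have [y yI sy] := IVT_dist bx s_cont sb e0 dev.
move: yI; rewrite in_itv /= => /andP[hby yx].
have [w0 wK wb] := window_spec e0.
have y_in : b <= y <= 1 by rewrite hby (le_trans yx x1).
have w_in : 0 <= window e <= (1 - b) / 2 by rewrite (ltW w0) wb.
have [u [bu uw1 /andP[uy yu]]] := exists_window y_in w_in.
have near_y z : u <= z <= u + window e -> e ^+ 2 / 4 <= (2 * s z ^+ 2 - 1) ^+ 2.
  move=> /andP[uz zu]; apply: (sqr_2sqr_sub1_ge e0 e4 sy).
  apply: s_mod => //; first by rewrite divr_gt0.
    by apply/andP; split; lra.
  by apply: le_lt_trans wK; rewrite ler_norml; apply/andP; split; lra.
have q0 : 0 <= e ^+ 2 / 4 by rewrite divr_ge0 ?sqr_ge0.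
have := le_trans (potential_integral_ge (ltW lam0) q0 w0 bu uw1 near_y)
  (potential_integral_le (ltW lam0) energy_le).
rewrite lee_fin; have -> : lam / 4 * (e ^+ 2 / 4) * b * window e =
  (lam * (e ^+ 2 * b * window e)) / 16 by field.
by rewrite ler_pdivrMr // (mulrC energy_bound).
Qed.

End minimizer.

Theorem proposition4 (R : realType) (b : R) (hb0 : 0 < b) (hb1 : b < 1)
  (s : R -> R -> R)
  (hmin : forall lam : R, 0 < lam -> is_minimizer b lam (s lam)) :
  forall eps : R, 0 < eps -> exists L : R, 0 < L /\
    forall lam : R, L < lam -> forall x : R, b <= x <= 1 ->
      `| s lam x - bdry_val R | < eps.
Proof.
move=> eps eps0.
pose e := Num.min eps 4^-1.
have e0 : 0 < e by rewrite lt_min eps0 invr_gt0 ltr0n.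
have e4 : e <= 4^-1 by rewrite ge_min lexx orbT.
have e_eps : e <= eps by rewrite ge_min lexx.
have [w0 _ _] := window_spec hb0 hb1 e0.
have P0 : 0 < e ^+ 2 * b * window b e by rewrite !mulr_gt0 // exprn_gt0.
have L0 : 0 < 16 * energy_bound b / (e ^+ 2 * b * window b e).
  by rewrite divr_gt0 // mulr_gt0 // energy_bound_gt0.
exists (16 * energy_bound b / (e ^+ 2 * b * window b e) + 1).
split=> [|lam Llam x xI]; first by rewrite ltr_wpDl // ltW.
have lam0 : 0 < lam by apply: lt_trans Llam; rewrite ltr_wpDl // ltW.
rewrite ltNge; apply/negP => dev.
have := minimizer_deviation_le hb0 hb1 lam0 (hmin lam lam0) e0 e4 xI
  (le_trans e_eps dev).
rewrite -ler_pdivlMr //; lra.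
Qed.
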